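(* Let $k$ be an algebraically closed field of characteristic zero and let $G=N\rtimes H$ be a finite group with normal subgroup $N$ and complement $H$, so that $(G,H,N)$ is a factorized group. Then the bismash product $k^H\# kN$ is isomorphic as a $k$-algebra to the group algebra $k(\mathbb Z_{|H|}\times N)$.
   Context: A factorized group $(G,L,F)$ is a finite group $G$ with subgroups $L,F$ such that $L\cap F=1$ and $G=LF$; each $lf$ ($l\in L$, $f\in F$) is uniquely $({}^{[l]}f)(l^{[f]})$ with ${}^{[l]}f\in F$, $l^{[f]}\in L$. The bismash product $k^L\# kF$ is the algebra with basis $l\# f$ ($l\in L$, $f\in F$) and multiplication $(l\# f)(\bar l\#\bar f)=\delta_{l^{[f]},\bar l}\, l\#(f\bar f)$, unit $\sum_{l} l\#1$. Here $L=H$ and $F=N$. *)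

From mathcomp Require Import all_boot all_fingroup all_algebra.
Set Implicit Arguments. Unset Strict Implicit. Unset Printing Implicit Defensive.
Import GRing.Theory.
Local Open Scope ring_scope.

(* Finite-dimensional k-algebras presented by a basis (a finite index type I)
   and structure constants: elements are coefficient vectors {ffun I -> k}.
   [alg_iso mulA oneA mulB oneB phi] : phi is a k-algebra isomorphism. *)
Definition alg_iso (k : fieldType) (I J : finType)
    (mulA : {ffun I -> k} -> {ffun I -> k} -> {ffun I -> k}) (oneA : {ffun I -> k})
    (mulB : {ffun J -> k} -> {ffun J -> k} -> {ffun J -> k}) (oneB : {ffun J -> k})
    (phi : {ffun I -> k} -> {ffun J -> k}) : Prop :=
  [/\ (forall (c : k) (a b : {ffun I -> k}), phi [ffun i => c * a i + b i] = [ffun j => c * phi a j + phi b j]),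
      bijective phi,
      (forall a b, phi (mulA a b) = mulB (phi a) (phi b)) &
      phi oneA = oneB].

Definition alg_isomorphic (k : fieldType) (I J : finType)
    (mulA : {ffun I -> k} -> {ffun I -> k} -> {ffun I -> k}) (oneA : {ffun I -> k})
    (mulB : {ffun J -> k} -> {ffun J -> k} -> {ffun J -> k}) (oneB : {ffun J -> k}) : Prop :=
  exists phi, alg_iso mulA oneA mulB oneB phi.

Definition galg_mul (k : fieldType) (K : finGroupType) (a b : {ffun K -> k}) : {ffun K -> k} :=
  [ffun g => \sum_(x : K) a x * b ((x^-1) * g)%g].
Definition galg_one (k : fieldType) (K : finGroupType) : {ffun K -> k} :=
  [ffun g => (g == 1%g)%:R].

(* Factorized group (G, L, F): for l in L, f in F, write l f = (^[l]f)(l^[f])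
   with ^[l]f in F and l^[f] in L.  [fact_right L F l f] is l^[f]
   (well defined when L :&: F = 1 and G = L * F). *)
Definition fact_right (gT : finGroupType) (L F : {group gT})
    (l : subg_of L) (f : subg_of F) : subg_of L :=
  odflt l [pick l' : subg_of L | ((sgval l * sgval f) * (sgval l')^-1)%g \in F].

(* Bismash product k^L # kF: basis l # f (l in L, f in F), with
   (l # f)(l' # f') = delta_{l^[f], l'} l # (f f'), unit sum_l l # 1. *)
Definition bismash_mul (k : fieldType) (gT : finGroupType) (L F : {group gT})
    (a b : {ffun (subg_of L * subg_of F)%type -> k}) : {ffun (subg_of L * subg_of F)%type -> k} :=
  [ffun p => \sum_(f : subg_of F) \sum_(f' : subg_of F)
       if (f * f')%g == p.2 then a (p.1, f) * b (fact_right p.1 f, f') else 0].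
Definition bismash_one (k : fieldType) (gT : finGroupType) (L F : {group gT})
    : {ffun (subg_of L * subg_of F)%type -> k} :=
  [ffun p => (p.2 == 1%g)%:R].

From mathcomp Require Import all_boot all_fingroup all_algebra.
From mathcomp Require Import cyclic separable cyclotomic.
Local Open Scope ring_scope.
Import GRing.Theory.

(* Since N is normal, l^[f] = l for all l, f, so k^H # kN is just the tensor
   product k^H (x) kN.  As k is algebraically closed of characteristic 0, it
   contains n = |H| distinct n-th roots of unity zeta; evaluating the
   Z_n-factor of k(Z_n x N) at the n characters j |-> zeta^j is a discrete
   Fourier transform k(Z_n) ~= k^{Z_n} ~= k^H.  It is multiplicative because
   each j |-> zeta^j is a character, and invertible by the orthogonality of
   these characters. *)

Lemma fact_right_sdprod {gT : finGroupType} {G H N : {group gT}} :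
  (N ><| H)%g = G -> forall l f, @fact_right gT H N l f = l.
Proof.
move=> /sdprodP [_ _ nNH tiNH] l f; rewrite /fact_right.
set x := sgval l; set y := sgval f.
have lH : x \in H := subgP l; have fN : y \in N := subgP f.
have conjN : (x * y * x^-1 \in N)%g.
  have -> : (x * y * x^-1 = y ^ x^-1)%g by rewrite /conjg invgK mulgA.
  by rewrite memJ_norm // groupV (subsetP nNH).
case: pickP => [l' l'N | /(_ l)]; last by rewrite conjN.
apply/esym/val_inj/eqP => /=; rewrite eq_mulgV1 -in_set1 -set1gE -tiNH inE.
rewrite [_ \in H]groupM ?groupV ?subgP // andbT.
have := groupM (groupVr conjN) l'N.
by rewrite !invMg invgK -!mulgA mulKg (mulgA y^-1)%g mulVg mul1g.
Qed.

Lemma closed_field_prim_root {k : closedFieldType} {n : nat} :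
  (0 < n)%N -> n%:R != 0 :> k -> exists z : k, n.-primitive_root z.
Proof.
move=> n_gt0 n_neq0.
have [r Dp] := closed_field_poly_normal ('X^n - 1 : {poly k}).
rewrite (monicP _) ?monicXnsubC // scale1r in Dp.
have r_roots : all n.-unity_root r by apply/allP=> z; rewrite -root_prod_XsubC -Dp.
have size_r : (n < (size r).+1)%N.
  by rewrite -(size_prod_XsubC r id) -Dp size_XnsubC.
have [|z] := hasP (has_prim_root n_gt0 r_roots _ size_r); last by exists z.
by rewrite -separable_prod_XsubC -Dp separable_Xn_sub_1.
Qed.

Lemma sum_expr_unity_root (k : fieldType) (n : nat) (x : k) :
  x ^+ n = 1 -> \sum_(i < n) x ^+ i = if x == 1 then n%:R else 0.
Proof.
move=> xn1; have [->|x_neq1] := eqVneq x 1.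
  by rewrite (eq_bigr (fun=> 1)) ?sumr_const ?card_ord // => i; rewrite expr1n.
have := subrX1 x n; rewrite xn1 subrr => /esym/eqP.
by rewrite mulf_eq0 subr_eq0 (negPf x_neq1) => /eqP.
Qed.

Lemma prim_root_orthogonal {k : fieldType} {n : nat} {w : k} :
  n.+1.-primitive_root w -> forall a b : 'I_n.+1,
  \sum_(i < n.+1) (w ^+ a / w ^+ b) ^+ i = if a == b then n.+1%:R else 0.
Proof.
move=> w_prim a b.
have wn1 (c : nat) : (w ^+ c) ^+ n.+1 = 1.
  by rewrite -exprM mulnC exprM (prim_expr_order w_prim) expr1n.
have wb_neq0 : w ^+ b != 0 by rewrite expf_neq0 // (prim_root_eq0 w_prim).
rewrite sum_expr_unity_root; last by rewrite exprMn exprVn !wn1 invr1 mulr1.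
have -> : (w ^+ a / w ^+ b == 1) = (w ^+ a == w ^+ b).
  by apply/eqP/eqP => [/divr1_eq | ->]; last rewrite divff.
by rewrite (eq_prim_root_expr w_prim) !modn_small.
Qed.

Section TrivialAction.

Variables (k : fieldType) (gT : finGroupType) (L F : {group gT}).
Hypothesis fact_right_id : forall l f, @fact_right gT L F l f = l.

Lemma bismash_mul_trivialE (a b : {ffun (subg_of L * subg_of F)%type -> k}) l f :
  bismash_mul a b (l, f) = \sum_(f1 : subg_of F) a (l, f1) * b (l, (f1^-1 * f)%g).
Proof.
rewrite ffunE; apply: eq_bigr => f1 _ /=.
rewrite (bigD1 (f1^-1 * f)%g) //= mulKVg eqxx fact_right_id big1 ?addr0 // => f2.
by case: ifP => // /eqP <-; rewrite mulKg eqxx.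
Qed.

End TrivialAction.

Lemma galg_mul_pairE (k : fieldType) (K1 K2 : finGroupType)
    (b c : {ffun (K1 * K2)%type -> k}) p :
  galg_mul b c p = \sum_(x1 : K1) \sum_(x2 : K2) b (x1, x2) * c ((x1, x2)^-1 * p)%g.
Proof. by rewrite ffunE pair_bigA; apply: eq_bigr => -[]. Qed.

Section Fourier.

Context {k : fieldType} {gT : finGroupType} {H N : {group gT}} {n : nat}.
Variable w : k.
Hypothesis w_prim : n.+1.-primitive_root w.
Variable r : subg_of H -> 'I_n.+1.
Hypothesis r_bij : bijective r.
Hypothesis fact_right_id : forall l f, @fact_right gT H N l f = l.

Local Notation I := ('I_n.+1 * subg_of N)%type.
Local Notation J := (subg_of H * subg_of N)%type.
(* As l runs over H, zeta l runs over the n.+1-th roots of unity. *)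
Local Notation zeta l := (w ^+ r l).

Definition fourier (b : {ffun I -> k}) : {ffun J -> k} :=
  [ffun p => \sum_(j : 'I_n.+1) zeta p.1 ^+ j * b (j, p.2)].

Definition inv_fourier (a : {ffun J -> k}) : {ffun I -> k} :=
  [ffun q : I => n.+1%:R^-1 * \sum_(l : subg_of H) (zeta l)^-1 ^+ q.1 * a (l, q.2)].

Lemma zeta_exprZp l (j1 j2 : 'I_n.+1) :
  zeta l ^+ (j1 * j2)%g = zeta l ^+ j1 * zeta l ^+ j2.
Proof.
rewrite /= expr_mod -?exprD //.
by rewrite -exprM mulnC exprM (prim_expr_order w_prim) expr1n.
Qed.

Lemma fourierM b c : fourier (galg_mul b c) = bismash_mul (fourier b) (fourier c).
Proof.
apply/ffunP => -[l f]; rewrite bismash_mul_trivialE // ffunE /=.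
under eq_bigr => j _ do rewrite galg_mul_pairE mulr_sumr.
under eq_bigr => j _ do under eq_bigr => j1 _ do rewrite mulr_sumr.
rewrite exchange_big; under eq_bigr => j1 _ do rewrite exchange_big.
rewrite exchange_big; apply: eq_bigr => f1 _ /=.
rewrite !ffunE big_distrl; apply: eq_bigr => j1 _ /=.
rewrite (reindex_inj (mulgI j1)) big_distrr; apply: eq_bigr => j2 _.
have -> : ((j1, f1)^-1 * (j1 * j2, f))%g = (j2, (f1^-1 * f)%g).
  by congr pair; rewrite /= mulKg.
by rewrite zeta_exprZp mulrACA.
Qed.

Lemma sum_zeta_exprV_expr (j j' : 'I_n.+1) :
  \sum_(l : subg_of H) (zeta l)^-1 ^+ j * zeta l ^+ j' = if j' == j then n.+1%:R else 0.
Proof.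
rewrite -(prim_root_orthogonal w_prim) (reindex r) /=; last exact: onW_bij.
apply: eq_bigr => l _.
by rewrite exprMn !exprVn -!exprM mulrC (mulnC j) (mulnC j').
Qed.

Lemma sum_expr_zeta_exprV (l l' : subg_of H) :
  \sum_(j < n.+1) zeta l ^+ j * (zeta l')^-1 ^+ j = if l == l' then n.+1%:R else 0.
Proof.
rewrite -(inj_eq (bij_inj r_bij)) -(prim_root_orthogonal w_prim).
by apply: eq_bigr => j _; rewrite exprMn.
Qed.

Lemma inv_fourierK : cancel fourier inv_fourier.
Proof.
move=> b; apply/ffunP => -[j f]; rewrite ffunE /=.
under eq_bigr => l _ do rewrite ffunE mulr_sumr.
rewrite exchange_big /=.
under eq_bigr => j' _ do rewrite (eq_bigr _ (fun l _ => mulrA _ _ _)) -big_distrl /=.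
under eq_bigr => j' _ do rewrite sum_zeta_exprV_expr.
rewrite (bigD1 j) //= eqxx big1 ?addr0 => [|j' /negPf -> //]; last exact: mul0r.
exact: mulKf (prim_root_natf_neq0 w_prim) _.
Qed.

Lemma fourier_invK : cancel inv_fourier fourier.
Proof.
move=> a; apply/ffunP => -[l f]; rewrite ffunE /=.
under eq_bigr => j _ do rewrite ffunE mulrCA mulr_sumr.
rewrite -mulr_sumr exchange_big /=.
under eq_bigr => l' _ do rewrite (eq_bigr _ (fun j _ => mulrA _ _ _)) -big_distrl /=.
under eq_bigr => l' _ do rewrite sum_expr_zeta_exprV.
rewrite (bigD1 l) //= eqxx big1 ?addr0 => [|l' /negPf]; last first.
  by rewrite eq_sym => ->; rewrite mul0r.
exact: mulKf (prim_root_natf_neq0 w_prim) _.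
Qed.

Lemma inv_fourierM a b :
  inv_fourier (bismash_mul a b) = galg_mul (inv_fourier a) (inv_fourier b).
Proof.
by rewrite -{1}(fourier_invK a) -{1}(fourier_invK b) -fourierM inv_fourierK.
Qed.

Lemma fourier1 : fourier (galg_one k _) = bismash_one k H N.
Proof.
apply/ffunP => -[l f]; rewrite !ffunE /= (bigD1 ord0) //= big1 => [|j j_neq0].
  by rewrite ffunE expr0 mul1r addr0.
rewrite ffunE /=.
have -> : ((j, f) == 1)%g = false by apply: contraNF j_neq0 => /eqP [->].
by rewrite mulr0.
Qed.

Lemma inv_fourier1 : inv_fourier (bismash_one k H N) = galg_one k _.
Proof. by rewrite -fourier1 inv_fourierK. Qed.

Lemma inv_fourier_linear (c : k) (a b : {ffun J -> k}) :
  inv_fourier [ffun i => c * a i + b i]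
  = [ffun q => c * inv_fourier a q + inv_fourier b q].
Proof.
apply/ffunP => q; rewrite !ffunE mulrCA -mulrDr; congr (_ * _).
rewrite mulr_sumr -big_split; apply: eq_bigr => l _ /=.
by rewrite ffunE mulrDr mulrCA.
Qed.

End Fourier.

Theorem mainTheorem12 (k : closedFieldType) (hk : [pchar k] =i pred0)
    (gT : finGroupType) (G H N : {group gT}) (hG : (N ><| H)%g = G) :
  alg_isomorphic
    (@bismash_mul k gT H N) (@bismash_one k gT H N)
    (@galg_mul k ('I_(#|H|.-1).+1 * subg_of N)%type)
    (@galg_one k ('I_(#|H|.-1).+1 * subg_of N)%type).
Proof.
have n_neq0 : (#|H|.-1).+1%:R != 0 :> k by rewrite (pcharf0P _).1.
have [w w_prim] := closed_field_prim_root (ltn0Sn _) n_neq0.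
have cardH : #|subg_of H| = (#|H|.-1).+1 by rewrite card_sub prednK ?cardG_gt0.
pose r (l : subg_of H) := cast_ord cardH (enum_rank l).
have r_bij : bijective r.
  exists (fun i => enum_val (cast_ord (esym cardH) i)) => [l | i].
    by rewrite /r cast_ordK enum_rankK.
  by rewrite /r enum_valK cast_ordKV.
have fact_right_id := fact_right_sdprod hG.
exists (inv_fourier w r); split.
- exact: inv_fourier_linear.
- by exists (fourier w r); [exact: fourier_invK | exact: inv_fourierK].
- exact: inv_fourierM.
- exact: inv_fourier1.
Qed.
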